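(* Let $G$ be a $k$-right-regular bipartite Tanner graph with girth $g$ and smallest left degree $d$, in which every right (constraint) node represents a constraint given by a binary linear $[k,k',\epsilon k]$ subcode on its $k$ neighbouring variable nodes, and let $x=\epsilon k-1$. Then the minimum pseudocodeword weights on the BSC and on the AWGN channel each satisfy \[ w_{\min} \ge \begin{cases} 1+dx+d(d-1)x^2+\cdots+d(d-1)^{\frac{g-6}{4}}x^{\frac{g-2}{4}}, & \frac{g}{2}\text{ odd},\\ 1+dx+\cdots+d(d-1)^{\frac{g-8}{4}}x^{\frac{g-4}{4}}+(d-1)^{\frac{g-4}{4}}x^{\frac{g}{4}}, & \frac{g}{2}\text{ even}.\end{cases}\]
   Context: A generalized Tanner graph is a finite bipartite graph with variable nodes $v_1,\dots,v_n$ and constraint nodes, each constraint node $u$ of degree $k$ being associated with a binary linear code of length $k$ (here an $[k,k',\epsilon k]$ code, i.e. of dimension $k'$ and minimum distance $\epsilon k$) on its neighbours; a codeword is an $x\in\{0,1\}^n$ whose restriction to the neighbourhood of every constraint node is a codeword of that node's subcode. A degree-$\ell$ lift $\hat G$ replaces each node by a cloud of $\ell$ copies and each edge $(x,y)$ by a perfect matching between the clouds, each copy of a constraint node carrying the same subcode constraint. A pseudocodeword of $G$ is a nonnegative integer vector $p=(p_1,\dots,p_n)$ obtained from a codeword of some finite lift by letting $p_i$ be the number of copies of $v_i$ with value 1. For nonzero $p$, let $e$ be the smallest number such that the sum of the $e$ largest $p_i$ is at least $\frac12\sum_ip_i$; $w^{BSC}(p)=2e$ if equality holds and $2e-1$ otherwise;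 $w^{AWGN}(p)=(\sum_ip_i)^2/\sum_ip_i^2$. The minimum pseudocodeword weight on a channel is the minimum of that weight over all nonzero pseudocodewords. *)

From HB Require Import structures.
From mathcomp Require Import all_boot all_order fingroup perm.
From mathcomp Require Import all_algebra.
Set Implicit Arguments. Unset Strict Implicit. Unset Printing Implicit Defensive.
Import Order.TTheory GRing.Theory Num.Theory.

(** A generalized Tanner graph with [n] variable nodes ('I_n), [m] constraint
    nodes ('I_m) in which every constraint node has [k] neighbours.
    [nb u] enumerates the k neighbours of constraint node [u] (a bijection
    'I_k -> neighbourhood of u), fixing the coordinate order in which the
    local subcode [code u] (a binary linear code of length k) is read. *)
Record tanner (n m k : nat) := Tanner {
  adj : 'I_n -> 'I_m -> bool;
  nb : 'I_m -> 'I_k -> 'I_n;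
  code : 'I_m -> {vspace 'rV['F_2]_k};
  nb_inj : forall u, injective (nb u);
  nb_adj : forall u j, adj (nb u j) u;
  nb_onto : forall u i, adj i u -> exists j, nb u j = i
}.

Section Defs.
Variables (n m k : nat) (G : tanner n m k).

Definition to_F2 (w : 'I_k -> bool) : 'rV['F_2]_k := \row_j ((w j)%:R)%R.

Definition hweight (c : 'rV['F_2]_k) : nat := #|[set j | c ord0 j != 0%R]|.

Definition is_code_params (C : {vspace 'rV['F_2]_k}) (k' D : nat) : Prop :=
  \dim C = k' /\
  (forall c, c \in C -> c != 0%R -> D <= hweight c) /\
  (exists2 c, c \in C & (c != 0%R) && (hweight c == D)).

Definition left_deg (i : 'I_n) : nat := #|[set u | adj G i u]|.
Definition right_deg (u : 'I_m) : nat := #|[set i | adj G i u]|.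

Definition right_regular (kk : nat) : Prop := forall u, right_deg u = kk.

Definition min_left_degree (d : nat) : Prop :=
  (forall i, d <= left_deg i) /\ exists i, left_deg i = d.

Definition tg_rel : rel ('I_n + 'I_m) := fun x y =>
  match x, y with
  | inl i, inr u => adj G i u
  | inr u, inl i => adj G i u
  | _, _ => false
  end.

Definition has_cycle_of_length (L : nat) : Prop :=
  exists s : seq ('I_n + 'I_m), [/\ size s = L, 3 <= L, uniq s & path.cycle tg_rel s].

Definition girth (g : nat) : Prop :=
  has_cycle_of_length g /\ forall L, has_cycle_of_length L -> g <= L.

(** a codeword of a degree-ell lift: [perm i u] is the perfect matching between
    the clouds of v_i and u (copy a of v_i is joined to copy perm i u a of u);
    [w i a] is the value of copy a of v_i. Copy b of u is joined, for each
    coordinate j, to copy (perm (nb u j) u)^-1 b of v_(nb u j). *)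
Definition lift_codeword (ell : nat) (perm : 'I_n -> 'I_m -> {perm 'I_ell})
    (w : 'I_n -> 'I_ell -> bool) : Prop :=
  forall (u : 'I_m) (b : 'I_ell),
    to_F2 (fun j => w (nb G u j) ((perm (nb G u j) u)^-1%g b)) \in code G u.

Definition pseudocodeword (p : 'I_n -> nat) : Prop :=
  exists ell (perm : 'I_n -> 'I_m -> {perm 'I_ell}) (w : 'I_n -> 'I_ell -> bool),
    lift_codeword perm w /\ forall i, p i = #|[set a | w i a]|.

End Defs.

Section Weights.
Variable n : nat.
Implicit Type p : 'I_n -> nat.

Definition total p : nat := \sum_(i < n) p i.

Definition top_sum p (e : nat) : nat :=
  \max_(S : {set 'I_n} | #|S| == e) \sum_(i in S) p i.

(** smallest e such that the sum of the e largest p_i is >= (1/2) sum_i p_i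
    (e = n always works, so the search over 0..n finds the minimum) *)
Definition bsc_e p : nat :=
  find (fun e => total p <= 2 * top_sum p e) (iota 0 n.+1).

Definition w_BSC p : nat :=
  let e := bsc_e p in
  if 2 * top_sum p e == total p then 2 * e else 2 * e - 1.

Definition w_AWGN p : rat :=
  ((total p)%:R ^+ 2 / (\sum_(i < n) (p i)%:R ^+ 2))%R.

End Weights.

Definition bterm (d x i : nat) : nat :=
  if i == 0 then 1 else d * (d - 1) ^ (i - 1) * x ^ i.

Definition pcw_bound (d x g : nat) : nat :=
  if odd (g %/ 2) then \sum_(i < (g - 2) %/ 4 + 1) bterm d x i
  else \sum_(i < (g - 4) %/ 4 + 1) bterm d x i + (d - 1) ^ ((g - 4) %/ 4) * x ^ (g %/ 4).

(* A pseudocodeword p satisfies a local inequality at every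
   constraint node u and neighbour i of u:  x p_i <= sum_(j in N(u), j <> i) p_j,
   with x = eps k - 1, because every copy of u adjacent to an active copy of v_i
   carries a nonzero local codeword, hence has at least x further active
   neighbours.  Unroll G from a variable node i0 into its computation tree:
   as long as twice the sum of their depths stays below the girth, branches
   hanging from distinct edges are disjoint sets of variable nodes, so
   iterating the local inequality down the tree, with branching at least
   d - 1, yields
   B p_i0 <= sum_i p_i where B is the bound of the theorem.  Since i0 is
   arbitrary, B p_i <= sum p for every i, which bounds both weights by B: the
   e largest entries sum to at most e (sum p) / B, and
   B sum_i p_i^2 <= sum_i p_i (sum p). *)

From Pilot Require Import Defs.
From HB Require Import structures.
From mathcomp Require Import all_boot all_order fingroup perm.
From mathcomp Require Import all_algebra.
From mathcomp Require Import zify.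
Import GRing.Theory Num.Theory.
Set Implicit Arguments. Unset Strict Implicit. Unset Printing Implicit Defensive.

Section NonBacktrackingWalks.
Variables (T : eqType) (e : rel T).
Hypotheses (e_sym : symmetric e) (e_irr : irreflexive e).

Fixpoint nonbacktracking (s : seq T) : bool :=
  if s is a :: s' then (if s' is _ :: c :: _ then a != c else true) && nonbacktracking s'
  else true.

Variable g : nat.
Hypothesis girth_le_cycle : forall c, 3 <= size c -> uniq c -> path.cycle e c -> g <= size c.

Lemma girth_le_repeating_walk x s :
  path e x s -> nonbacktracking (x :: s) -> ~~ uniq (x :: s) -> g <= size s.
Proof.
elim: s x => [|y s IHs] x //= /andP[exy ys] /andP[xNs nb_ys].
rewrite negb_and negbK => /orP[xys|]; last by move/(IHs _ ys nb_ys)/leqW.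
have [/(IHs _ ys nb_ys)/leqW // | uniq_ys] := boolP (~~ uniq (y :: s)).
rewrite negbK in uniq_ys.
have xy : x != y by apply: contraTneq exy => ->; rewrite e_irr.
move: xys; rewrite inE (negbTE xy) /= => xs.
case/splitPr: xs uniq_ys ys xNs => s1 s2 uniq_ys ys xNs.
have s1_gt0 : 0 < size s1 by case: s1 xNs {uniq_ys ys} => //=; rewrite eqxx.
apply: (@leq_trans (size (x :: y :: s1))).
  apply: girth_le_cycle => /=; first by rewrite ltnS.
    move: uniq_ys; rewrite -cat_cons cat_uniq => /and3P[uniq_ys1 /hasPn xNys1 _].
    by rewrite -cons_uniq uniq_ys1 andbT; apply: xNys1; rewrite inE eqxx.
  by rewrite rcons_path exy; move: ys; rewrite cat_path => /andP[-> /andP[]].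
by rewrite size_cat /= addnS !ltnS leq_addr.
Qed.

Lemma girth_le_walk_to_neighbour a y1 y2 s2 :
  e y1 a -> path e a (y2 :: s2) -> nonbacktracking [:: a, y2 & s2] ->
  y1 != y2 -> y1 \in y2 :: s2 -> g <= size s2 + 2.
Proof.
move=> y1a walk2 nb2 y12 y1_in; rewrite addn2.
apply: (@girth_le_repeating_walk y1 [:: a, y2 & s2]) => /=.
- by rewrite y1a.
- by rewrite /= y12.
- by rewrite negb_and negbK inE y1_in orbT.
Qed.

Lemma girth_le_diverging_walks a y1 s1 y2 s2 z :
  path e a (y1 :: s1) -> path e a (y2 :: s2) ->
  nonbacktracking [:: a, y1 & s1] -> nonbacktracking [:: a, y2 & s2] ->
  y1 != y2 -> z \in y1 :: s1 -> z \in y2 :: s2 -> g <= size s1 + size s2 + 2.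
Proof.
elim: s1 a y1 y2 s2 => [|w s1 IHs1] a y1 y2 s2 /andP[ay1 walk1] walk2 nb1 nb2 y12.
  rewrite inE => /eqP-> y1_in.
  by rewrite add0n; apply: girth_le_walk_to_neighbour walk2 nb2 y12 y1_in; rewrite e_sym.
have [-> _ y1_in|zNy1 z1 z2] := eqVneq z y1.
  apply: leq_trans (girth_le_walk_to_neighbour _ walk2 nb2 y12 y1_in) _; first by rewrite e_sym.
  by rewrite leq_add2r leq_addl.
have z1' : z \in w :: s1 by move: z1; rewrite inE (negbTE zNy1).
case/andP: nb1 => aNw nb1.
apply: leq_trans (IHs1 y1 w a (y2 :: s2) walk1 _ nb1 _ _ z1' _) _.
- by rewrite /= e_sym ay1.
- by rewrite /= y12.
- by rewrite eq_sym.
- by rewrite inE z2 orbT.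
- by rewrite /= addSnnS.
Qed.
End NonBacktrackingWalks.

Lemma sum_card_other_rows_ge (J B : finType) (W : J -> B -> bool) j0 D :
  (forall b, W j0 b -> D <= #|[set j | W j b]|) ->
  (D - 1) * #|[set b | W j0 b]| <= \sum_(j | j != j0) #|[set b | W j b]|.
Proof.
move=> col_ge.
have -> : \sum_(j | j != j0) #|[set b | W j b]| = \sum_b #|[set j | (j != j0) && W j b]|.
  under eq_bigr do rewrite -sum1_card.
  rewrite (exchange_big_dep xpredT) //=; apply: eq_bigr => b _.
  by rewrite -sum1_card; apply: eq_bigl => j; rewrite !inE.
rewrite [leqRHS](bigID (W j0)) /= mulnC -sum_nat_const.
apply: leq_trans (leq_addr _ _); under eq_bigl do rewrite inE.
apply: leq_sum => b W0b; rewrite leq_subLR.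
suff <- : #|[set j | W j b]| = 1 + #|[set j | (j != j0) && W j b]| by exact: col_ge.
by rewrite (cardsD1 j0) inE W0b; congr (_ + _); apply: eq_card => j; rewrite !inE.
Qed.

Lemma hweight_to_F2 k (w : 'I_k -> bool) : hweight (to_F2 w) = #|[set j | w j]|.
Proof. by apply: eq_card => j; rewrite !inE mxE; case: (w j). Qed.

Lemma to_F2_neq0 k (w : 'I_k -> bool) j : w j -> to_F2 w != 0%R.
Proof.
by move=> wj; apply/eqP => /matrixP/(_ ord0 j); rewrite !mxE wj => /eqP; rewrite oner_eq0.
Qed.

Lemma sum_other_neighbours n m k (G : tanner n m k) u j0 (f : 'I_n -> nat) :
  \sum_(j | adj G j u && (j != nb G u j0)) f j = \sum_(jj | jj != j0) f (nb G u jj).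
Proof.
have nb_inj_in : {in [set jj | jj != j0] &, injective (nb G u)}.
  by move=> ? ? _ _; apply: nb_inj.
rewrite [RHS](eq_bigl (mem [set jj | jj != j0])); last by move=> jj; rewrite /= !inE.
rewrite -(big_imset _ nb_inj_in); apply: eq_bigl => j.
apply/andP/imsetP => [[/nb_onto[jj <-] jjN] | [jj jjN ->]].
  by exists jj => //; rewrite inE; apply: contraNneq jjN => ->.
by rewrite inE in jjN; rewrite (inj_eq (@nb_inj _ _ _ G u)) jjN; split; first exact: nb_adj.
Qed.

Lemma pseudocodeword_local_bound n m k D (G : tanner n m k) (p : 'I_n -> nat) :
  (forall u c, c \in code G u -> c != 0%R -> D <= hweight c) -> pseudocodeword G p ->
  forall i u, adj G i u -> (D - 1) * p i <= \sum_(j | adj G j u && (j != i)) p j.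
Proof.
move=> dist_ge [ell [perm [w [lift_w p_card]]]] i u aiu.
have [j0 <-] := nb_onto aiu.
pose W jj b := w (nb G u jj) ((perm (nb G u jj) u)^-1%g b).
have p_nb jj : p (nb G u jj) = #|[set b | W jj b]|.
  rewrite p_card -(card_preimset [set a | w (nb G u jj) a] (@perm_inj _ (perm (nb G u jj) u)^-1%g)).
  by apply: eq_card => b; rewrite !inE.
rewrite sum_other_neighbours (p_nb j0); under eq_bigr do rewrite p_nb.
apply: sum_card_other_rows_ge => b W0b.
by rewrite -hweight_to_F2; apply: dist_ge (lift_w u b) (@to_F2_neq0 _ (W^~ b) j0 W0b).
Qed.

Lemma sum_bigcup_disjoint (I T : finType) (K : pred I) (F : I -> {set T}) (f : T -> nat) :
  {in K &, forall a b, a != b -> [disjoint F a & F b]} ->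
  \sum_(t in \bigcup_(c | K c) F c) f t = \sum_(c | K c) \sum_(t in F c) f t.
Proof.
move=> disjF; pose FK c := if K c then F c else set0.
have -> : \bigcup_(c | K c) F c = \bigcup_c FK c by rewrite big_mkcond.
rewrite partition_disjoint_bigcup => [|a b ab]; last first.
  rewrite /FK; case: ifP => Ka; last by rewrite -setI_eq0 set0I.
  by case: ifP => Kb; [exact: disjF | rewrite -setI_eq0 setI0].
by rewrite [RHS]big_mkcond; apply: eq_bigr => c _; rewrite /FK; case: ifP; rewrite ?big_set0.
Qed.

Definition branch_factor (d x h : nat) : nat := \sum_(l < h) ((d - 1) * x) ^ l.

Lemma branch_factorS d x h : branch_factor d x h.+1 = 1 + (d - 1) * x * branch_factor d x h.
Proof.
rewrite /branch_factor big_ord_recl expn0 big_distrr /=; congr (_ + _).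
by apply: eq_bigr => l _; rewrite expnS.
Qed.

Lemma branch_factorSr d x h :
  branch_factor d x h.+1 = branch_factor d x h + ((d - 1) * x) ^ h.
Proof. by rewrite /branch_factor big_ord_recr. Qed.

Lemma sum_bterm d x t : \sum_(i < t.+1) bterm d x i = 1 + d * x * branch_factor d x t.
Proof.
rewrite big_ord_recl /branch_factor big_distrr; congr (_ + _); apply: eq_bigr => i _.
by rewrite lift0 /bterm /= !subn1 /= expnMn expnS; nia.
Qed.

Lemma sum_bterm_tail d x t : 0 < d ->
  \sum_(i < t.+1) bterm d x i + (d - 1) ^ t * x ^ t.+1 =
  1 + x * branch_factor d x t.+1 + (d - 1) * x * branch_factor d x t.
Proof.
move=> d_gt0; rewrite sum_bterm branch_factorSr expnMn expnS.
move: (branch_factor d x t) ((d - 1) ^ t) (x ^ t) => B a b; nia.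
Qed.

Section ComputationTree.
Variables (n m k : nat) (G : tanner n m k).
Local Notation e := (tg_rel G).

Lemma tg_rel_sym : symmetric e.
Proof. by case=> [i|u] [j|v]. Qed.

Lemma tg_rel_irr : irreflexive e.
Proof. by case. Qed.

Variable g : nat.
Hypothesis girth_le : forall L, has_cycle_of_length G L -> g <= L.

Let girth_le_cycle c : 3 <= size c -> uniq c -> path.cycle e c -> g <= size c.
Proof. by move=> c_ge3 uniq_c cycle_c; apply: girth_le; exists c. Qed.

(* The variable nodes on the first h variable levels of the computation tree
   of G hanging from the edge (u, j), i.e. explored from j without going back
   through u. *)
Fixpoint branch (h : nat) (j : 'I_n) (u : 'I_m) : {set 'I_n} :=
  if h is h'.+1 then
    j |: \bigcup_(c : 'I_m * 'I_n | [&& adj G j c.1, c.1 != u, adj G c.2 c.1 & c.2 != j])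
           branch h' c.2 c.1
  else set0.

Definition children (j : 'I_n) (U : pred 'I_m) (depth : 'I_m -> nat) : {set 'I_n} :=
  \bigcup_(c : 'I_m * 'I_n | [&& U c.1, adj G c.2 c.1 & c.2 != j]) branch (depth c.1) c.2 c.1.

Lemma branchS h j u :
  branch h.+1 j u = j |: children j (fun u' => adj G j u' && (u' != u)) (fun=> h).
Proof. by rewrite /= /children; congr (_ |: _); apply: eq_bigl => c; rewrite andbA. Qed.

Lemma branch_walk h j u i : adj G j u -> i \in branch h j u ->
  exists s, [/\ path e (inr u) (inl j :: s), nonbacktracking [:: inr u, inl j & s],
                size s + 2 <= 2 * h & inl i \in inl j :: s].
Proof.
elim: h j u => [|h IHh] j u aju; first by rewrite inE.
rewrite in_setU1 => /orP[/eqP->|]; first by exists [::]; rewrite /= aju mulnS inE.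
case/bigcupP=> -[u' j'] /and4P[/= aju' u'Nu aj'u' j'Nj].
case/(IHh _ _ aj'u') => s [walk nb size_s i_in].
exists [:: inr u', inl j' & s]; split.
- by rewrite /= aju aju'.
- by rewrite /= eq_sym u'Nu eq_sym j'Nj.
- by move: size_s; rewrite /= mulnS; clear; lia.
- by do 2 apply: mem_behead.
Qed.

Let tg_girth_le_diverging_walks :=
  girth_le_diverging_walks tg_rel_sym tg_rel_irr girth_le_cycle.

Lemma branch_no_return h j j' u : adj G j u -> adj G j' u -> j' != j ->
  j \in branch h j' u -> g <= 2 * h.
Proof.
move=> aju aj'u j'Nj /(branch_walk aj'u) [s [walk nb size_s j_in]].
apply: leq_trans size_s.
apply: (@tg_girth_le_diverging_walks (inr u) (inl j) [::] (inl j') s (inl j)) => //.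
- by rewrite /= aju.
- by rewrite /= eq_sym.
- exact: mem_head.
Qed.

Lemma branches_meet h1 h2 j u1 j1 u2 j2 i :
  adj G j u1 -> adj G j u2 -> adj G j1 u1 -> adj G j2 u2 -> j1 != j -> j2 != j ->
  (u1, j1) != (u2, j2) -> i \in branch h1 j1 u1 -> i \in branch h2 j2 u2 ->
  g + 2 * (u1 == u2) <= 2 * h1 + 2 * h2.
Proof.
move=> aju1 aju2 aj1u1 aj2u2 j1Nj j2Nj c12.
move=> /(branch_walk aj1u1) [s1 [walk1 nb1 size1 i1]].
move=> /(branch_walk aj2u2) [s2 [walk2 nb2 size2 i2]].
have [eu|u12] := eqVneq u1 u2.
  subst u2.
  have j12 : inl j1 != inl j2 :> 'I_n + 'I_m by apply: contraNneq c12 => -[->].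
  have := tg_girth_le_diverging_walks walk1 walk2 nb1 nb2 j12 i1 i2.
  by move: size1 size2; clear; rewrite /=; lia.
rewrite muln0 addn0.
apply: leq_trans (@tg_girth_le_diverging_walks (inl j) (inr u1) (inl j1 :: s1)
  (inr u2) (inl j2 :: s2) (inl i) _ _ _ _ _ _ _) _.
- exact/andP.
- exact/andP.
- by apply/andP; rewrite eq_sym.
- by apply/andP; rewrite eq_sym.
- by [].
- exact: mem_behead.
- exact: mem_behead.
- by move: size1 size2; rewrite /=; clear; lia.
Qed.

Definition depths_fit_girth (U : pred 'I_m) (depth : 'I_m -> nat) : Prop :=
  forall u1 u2, U u1 -> U u2 -> 2 * depth u1 + 2 * depth u2 < g + 2 * (u1 == u2).

Lemma notin_children j U depth : {in U, forall u, adj G j u} -> depths_fit_girth U depth ->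
  j \notin children j U depth.
Proof.
move=> Uadj fit; apply/bigcupP => -[[u j'] /and3P[/= Uu aj'u j'Nj] j_in].
have depth_gt0 : 0 < depth u by case: (depth u) j_in; rewrite ?inE.
have := branch_no_return (Uadj _ Uu) aj'u j'Nj j_in.
by have := fit _ _ Uu Uu; rewrite eqxx; lia.
Qed.

Variables (p : 'I_n -> nat) (x d : nat).
Hypothesis local_bound :
  forall i u, adj G i u -> x * p i <= \sum_(j | adj G j u && (j != i)) p j.
Hypothesis left_deg_ge : forall i, d <= left_deg G i.

Lemma children_sum j U depth : {in U, forall u, adj G j u} -> depths_fit_girth U depth ->
  (forall u j', U u -> adj G j' u ->
     p j' * branch_factor d x (depth u) <= \sum_(i in branch (depth u) j' u) p i) ->
  \sum_(u | U u) x * p j * branch_factor d x (depth u) <= \sum_(i in children j U depth) p i.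
Proof.
move=> Uadj fit branch_ge.
rewrite /children sum_bigcup_disjoint => [|[u1 j1] [u2 j2]]; last first.
  move=> /and3P[/= U1 a1 n1] /and3P[/= U2 a2 n2] c12.
  apply/pred0P => i /=; apply/negbTE/negP => /andP[i1 i2].
  have := branches_meet (Uadj _ U1) (Uadj _ U2) a1 a2 n1 n2 c12 i1 i2.
  by rewrite leqNgt fit.
rewrite -(pair_big_dep U (fun u j' => adj G j' u && (j' != j))
                       (fun u j' => \sum_(i in branch (depth u) j' u) p i)).
apply: leq_sum => u Uu.
apply: leq_trans (_ : \sum_(j' | adj G j' u && (j' != j)) p j' * branch_factor d x (depth u) <= _).
  by rewrite -big_distrl leq_mul2r local_bound ?orbT ?Uadj.
by apply: leq_sum => j' /andP[aj'u _]; apply: branch_ge.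
Qed.

Lemma card_other_constraints j u : adj G j u ->
  d - 1 <= #|[pred u' | adj G j u' && (u' != u)]|.
Proof.
move=> aju; have := left_deg_ge j; rewrite /left_deg (cardsD1 u) inE aju.
suff -> : #|[set u' | adj G j u'] :\ u| = #|[pred u' | adj G j u' && (u' != u)]| by lia.
by apply: eq_card => u'; rewrite !inE andbC.
Qed.

Lemma branch_sum h j u : adj G j u -> 4 * h < g + 4 ->
  p j * branch_factor d x h <= \sum_(i in branch h j u) p i.
Proof.
elim: h j u => [|h IHh] j u aju h_lt; first by rewrite /branch_factor big_ord0 muln0.
set U := fun u' => adj G j u' && (u' != u).
have Uadj : {in U, forall u', adj G j u'} by move=> u' /andP[].
have fit : depths_fit_girth U (fun=> h) by move=> u1 u2 _ _; lia.
rewrite branchS big_setU1 ?notin_children //= branch_factorS mulnDr muln1 leq_add2l.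
apply: leq_trans (children_sum Uadj fit _); last by move=> u' j' _ aj'u'; apply: IHh; lia.
have -> : p j * ((d - 1) * x * branch_factor d x h) = (d - 1) * (x * p j * branch_factor d x h).
  by rewrite mulnCA !mulnA.
by rewrite sum_nat_const leq_mul2r card_other_constraints ?orbT.
Qed.

Lemma tree_sum i0 depth : depths_fit_girth (adj G i0) depth ->
  p i0 + \sum_(u | adj G i0 u) x * p i0 * branch_factor d x (depth u) <= \sum_i p i.
Proof.
move=> fit; rewrite [leqRHS](bigID (mem (i0 |: children i0 (adj G i0) depth))) /=.
apply: leq_trans (leq_addr _ _).
rewrite big_setU1 ?notin_children //= leq_add2l.
apply: children_sum => // u j' ai0u aj'u; apply: branch_sum aj'u _.
by have := fit u u ai0u ai0u; rewrite eqxx; lia.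
Qed.

Hypotheses (g_ge3 : 3 <= g) (d_gt0 : 0 < d).

Lemma card_constraints_ge i : d <= #|[pred u | adj G i u]|.
Proof. by apply: leq_trans (left_deg_ge i) _; apply: eq_leq; apply: eq_card => u; rewrite inE. Qed.

Lemma pcw_bound_odd_mul_le_total i0 : odd (g %/ 2) ->
  pcw_bound d x g * p i0 <= \sum_i p i.
Proof.
move=> g2_odd; rewrite /pcw_bound g2_odd; set t := (g - 2) %/ 4.
have fit : depths_fit_girth (adj G i0) (fun=> t) by move=> u1 u2 _ _; lia.
apply: leq_trans (tree_sum fit); rewrite addn1 sum_bterm sum_nat_const mulnDl mul1n leq_add2l.
by rewrite mulnAC -!mulnA leq_mul ?card_constraints_ge.
Qed.

(* When g/2 is even, one branch at the root has room for an extra level. *)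
Lemma pcw_bound_even_mul_le_total i0 : ~~ odd (g %/ 2) ->
  pcw_bound d x g * p i0 <= \sum_i p i.
Proof.
move=> g2_even; have g2_mod : (g %/ 2) %% 2 = 0 by rewrite modn2 (negbTE g2_even).
rewrite /pcw_bound (negbTE g2_even); set t := (g - 4) %/ 4.
have [u0 ai0u0] : exists u0, adj G i0 u0.
  have /card_gt0P[u0 ai0u0] : 0 < #|[pred u | adj G i0 u]|.
    exact: leq_trans d_gt0 (card_constraints_ge i0).
  by exists u0.
have fit : depths_fit_girth (adj G i0) (fun u => t + (u == u0)).
  move=> u1 u2 _ _.
  case: (eqVneq u1 u0) => [e1|_]; case: (eqVneq u2 u0) => [e2|_] /=; try by lia.
  by rewrite e1 e2 eqxx /=; lia.
apply: leq_trans (tree_sum fit).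
have -> : g %/ 4 = t.+1 by rewrite /t; lia.
rewrite (bigD1 u0) //= eqxx addn1 sum_bterm_tail //.
rewrite (eq_bigr (fun=> x * p i0 * branch_factor d x t)) => [|u /andP[_ /negbTE->]]; last first.
  by rewrite addn0.
rewrite sum_nat_const.
have := leq_mul (card_other_constraints ai0u0) (leqnn (x * p i0 * branch_factor d x t)).
move: #|_| (branch_factor d x t) (branch_factor d x t.+1) => c B B'; nia.
Qed.

Lemma pcw_bound_mul_le_total i0 : pcw_bound d x g * p i0 <= \sum_i p i.
Proof.
case: (boolP (odd (g %/ 2))).
  exact: pcw_bound_odd_mul_le_total.
exact: pcw_bound_even_mul_le_total.
Qed.
End ComputationTree.

Section ChannelWeights.
Variables (n : nat) (p : 'I_n -> nat) (B : nat).
Hypotheses (p_neq0 : exists i, 0 < p i) (p_le_total : forall i, B * p i <= Defs.total p).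

Lemma total_le_top_sum_bsc_e : Defs.total p <= 2 * top_sum p (bsc_e p).
Proof.
have total_le_top : Defs.total p <= top_sum p n.
  have := @leq_bigmax_cond _ (fun S : {set 'I_n} => #|S| == n) (fun S => \sum_(i in S) p i) setT.
  rewrite cardsT card_ord eqxx => /(_ isT); apply: leq_trans; apply: eq_leq.
  by apply: eq_bigl => i; rewrite inE.
have has_e : has (fun e => Defs.total p <= 2 * top_sum p e) (iota 0 n.+1).
  by apply/hasP; exists n; [rewrite mem_iota add0n ltnSn | lia].
have e_lt : bsc_e p < n.+1 by move: has_e; rewrite has_find size_iota.
by have := nth_find 0 has_e; rewrite nth_iota.
Qed.

Lemma top_sum_mul_le e : B * top_sum p e <= e * Defs.total p.
Proof.
apply: (big_ind (fun t => B * t <= e * Defs.total p)) => [|a b|S /eqP <-].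
- by rewrite muln0.
- by rewrite maxnMr geq_max => -> ->.
- by rewrite big_distrr -sum_nat_const leq_sum.
Qed.

Lemma total_gt0 : 0 < Defs.total p.
Proof. by case: p_neq0 => i0 pi0; rewrite /Defs.total (bigD1 i0) //= addn_gt0 pi0. Qed.

Lemma w_BSC_ge : B <= w_BSC p.
Proof.
have := total_gt0; have := total_le_top_sum_bsc_e; have := top_sum_mul_le (bsc_e p).
rewrite /w_BSC; move: (bsc_e p) (Defs.total p) (top_sum p (bsc_e p)) => e T S BS T_le T_gt0.
have B2S_le : B * (2 * S) <= 2 * e * T by rewrite mulnCA -mulnA leq_mul2l BS orbT.
have BT_le : B * T <= B * (2 * S) by rewrite leq_mul2l T_le orbT.
case: eqP => [_|T_neq]; first by rewrite -(leq_pmul2r T_gt0) (leq_trans BT_le B2S_le).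
have [-> //|B_gt0] := posnP B.
have BT_lt : B * T < B * (2 * S).
  by rewrite ltn_pmul2l // ltn_neqAle T_le andbT eq_sym; apply/eqP.
suff : B < 2 * e by lia.
by rewrite -(ltn_pmul2r T_gt0) (leq_trans BT_lt B2S_le).
Qed.

Lemma w_AWGN_ge : (B%:R <= w_AWGN p :> rat)%R.
Proof.
have [i0 pi0] := p_neq0.
have sq_gt0 : 0 < \sum_i p i ^ 2 by rewrite (bigD1 i0) //= addn_gt0 expn_gt0 pi0.
have sq_le : B * \sum_i p i ^ 2 <= Defs.total p ^ 2.
  rewrite big_distrr expnS expn1 [leqRHS]big_distrl /=; apply: leq_sum => i _.
  by rewrite expnS expn1 mulnCA leq_mul2l p_le_total orbT.
rewrite /w_AWGN -(eq_bigr _ (fun i _ => natrX _ (p i) 2)) -natr_sum.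
by rewrite ler_pdivlMr ?ltr0n // -natrX -natrM ler_nat.
Qed.
End ChannelWeights.

Theorem theorem2 (n m k k' D d g : nat) (G : tanner n m k) :
  right_regular G k ->
  (forall u, is_code_params (code G u) k' D) ->
  min_left_degree G d -> 0 < d ->
  girth G g ->
  forall p : 'I_n -> nat, pseudocodeword G p -> (exists i, 0 < p i) ->
    pcw_bound d (D - 1) g <= w_BSC p /\
    ((pcw_bound d (D - 1) g)%:R <= w_AWGN p)%R.
Proof.
move=> _ code_params [left_deg_ge _] d_gt0 [[_ [_ g_ge3 _ _]] girth_le] p pcw p_neq0.
have local_bound := pseudocodeword_local_bound (fun u => (code_params u).2.1) pcw.
have bound_le i : pcw_bound d (D - 1) g * p i <= Defs.total p.
  exact (pcw_bound_mul_le_total girth_le local_bound left_deg_ge g_ge3 d_gt0 i).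
by split; [apply: w_BSC_ge | apply: w_AWGN_ge].
Qed.
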